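(* In the biased planner's myopic problem described in the context, for every $b\in[1-p,0.5]$, $\pi^0_B(b)\in\{p,1-b\}$.
   Context: A binary state $\omega\in\{G,B\}$; for an agent with public belief $b$ and private signal precision $q\in[0.5,1]$ (signal matches $\omega$ with probability $q$), the action is the signal if $1-q\le b\le q$, $G$ if $b>q$, $B$ if $b<1-q$. Let $z(b,q)=b+q-2bq$. The biased planner has baseline precision $p\in[0.5,1)$, cost $\beta:[0,1]\to[0,\infty)$ non-negative, increasing, continuous, concave with $\beta(0)=0$, and $C>0$; its instantaneous reward is $r_B(b,q)=-\beta(|q-p|)-Cz(b,q)$ if $q\ge\max(b,1-b)$, $-\beta(|q-p|)-C$ if $b<1-q$, and $-\beta(|q-p|)$ if $b>q$. The myopic optimal precision $\pi^0_B(b)$ is a maximizer of $q\mapsto r_B(b,q)$ over $[0.5,1]$. *)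

From Stdlib Require Import Reals.
Open Scope R_scope.

Definition zfun (b q : R) : R := b + q - 2 * b * q.

Definition rB (beta : R -> R) (p C b q : R) : R :=
  if Rlt_dec b (1 - q) then - beta (Rabs (q - p)) - C
  else if Rlt_dec q b then - beta (Rabs (q - p))
  else - beta (Rabs (q - p)) - C * zfun b q.

Definition nonneg_on01 (beta : R -> R) : Prop :=
  forall x, 0 <= x <= 1 -> 0 <= beta x.

Definition increasing_on01 (beta : R -> R) : Prop :=
  forall x y, 0 <= x <= 1 -> 0 <= y <= 1 -> x <= y -> beta x <= beta y.

Definition continuous_on01 (beta : R -> R) : Prop :=
  forall x, 0 <= x <= 1 ->
    forall eps, 0 < eps -> exists delta, 0 < delta /\
      forall y, 0 <= y <= 1 -> Rabs (y - x) < delta -> Rabs (beta y - beta x) < eps.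

Definition concave_on01 (beta : R -> R) : Prop :=
  forall x y t, 0 <= x <= 1 -> 0 <= y <= 1 -> 0 <= t <= 1 ->
    t * beta x + (1 - t) * beta y <= beta (t * x + (1 - t) * y).

Definition cost_ok (beta : R -> R) : Prop :=
  nonneg_on01 beta /\ increasing_on01 beta /\ continuous_on01 beta /\
  concave_on01 beta /\ beta 0 = 0.

Definition myopic_opt (beta : R -> R) (p C b q : R) : Prop :=
  1/2 <= q <= 1 /\
  forall q', 1/2 <= q' <= 1 -> rB beta p C b q' <= rB beta p C b q.

(* For b in [1-p, 1/2] the belief lies in the signal region exactly when
   q >= 1-b.  There z(b,.) is affine and nondecreasing in q and the cost
   beta is concave, so the reward is convex on [1-b, p] and nonincreasing on
   [p, 1]; it is therefore maximal at q = p or q = 1-b.  Below 1-b the agent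
   herds on B, which costs C >= C z(b, 1-b) and a larger distortion than
   q = 1-b. *)

From Stdlib Require Import Reals Lra Psatz.
Open Scope R_scope.

Lemma zfun_convex_comb (b x y t : R) :
  zfun b (t * x + (1 - t) * y) = t * zfun b x + (1 - t) * zfun b y.
Proof. unfold zfun; ring. Qed.

Lemma zfun_le_compat (b x y : R) : b <= 1/2 -> x <= y -> zfun b x <= zfun b y.
Proof. intros hb hxy; unfold zfun; nra. Qed.

Lemma zfun_le_1 (b q : R) : 0 <= b <= 1 -> 0 <= q <= 1 -> zfun b q <= 1.
Proof. intros hb hq; unfold zfun; nra. Qed.

Lemma concave_scale (beta : R -> R) (d t : R) :
  concave_on01 beta -> beta 0 = 0 -> 0 <= d <= 1 -> 0 <= t <= 1 ->
  t * beta d <= beta (t * d).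
Proof.
  intros hconc h0 hd ht.
  assert (hc := hconc d 0 t hd ltac:(lra) ht).
  rewrite h0, !Rmult_0_r, !Rplus_0_r in hc.
  exact hc.
Qed.

Lemma convex_comb_le_Rmax (x y t : R) :
  0 <= t <= 1 -> t * x + (1 - t) * y <= Rmax x y.
Proof.
  intros ht.
  assert (x <= Rmax x y) by apply Rmax_l.
  assert (y <= Rmax x y) by apply Rmax_r.
  nra.
Qed.

Lemma segment_convex_comb (x y q : R) :
  x <= q <= y -> exists t, 0 <= t <= 1 /\ q = t * x + (1 - t) * y.
Proof.
  intros hq.
  destruct (Req_dec x y) as [hxy | hxy].
  - exists 0; split; [lra | subst; lra].
  - set (t := (y - q) / (y - x)).
    assert (ht : t * (y - x) = y - q) by (unfold t; field; lra).
    exists t; split; [split | ]; nra.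
Qed.

Lemma rB_herd_B (beta : R -> R) (p C b q : R) :
  b < 1 - q -> rB beta p C b q = - beta (Rabs (q - p)) - C.
Proof. intros h; unfold rB; destruct (Rlt_dec b (1 - q)); [reflexivity | lra]. Qed.

Lemma rB_signal (beta : R -> R) (p C b q : R) :
  1 - q <= b <= q -> rB beta p C b q = - beta (Rabs (q - p)) - C * zfun b q.
Proof.
  intros h; unfold rB.
  destruct (Rlt_dec b (1 - q)); [lra |].
  destruct (Rlt_dec q b); [lra | reflexivity].
Qed.

Section BiasedPlannerReward.

Variables (beta : R -> R) (p C b : R).
Hypotheses (hp : 1/2 <= p <= 1) (hC : 0 <= C) (hb : 1 - p <= b <= 1/2).
Hypotheses (hnn : nonneg_on01 beta) (hinc : increasing_on01 beta)
  (hconc : concave_on01 beta) (h0 : beta 0 = 0).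

Let r := rB beta p C b.

Lemma rB_at_p : r p = - C * zfun b p.
Proof.
  unfold r; rewrite rB_signal by lra.
  rewrite Rminus_diag, Rabs_R0, h0; ring.
Qed.

Lemma rB_at_1_sub_b : r (1 - b) = - beta (p - (1 - b)) - C * zfun b (1 - b).
Proof.
  unfold r; rewrite rB_signal by lra.
  rewrite Rabs_minus_sym, Rabs_right by lra; reflexivity.
Qed.

Lemma rB_le_at_1_sub_b_herding (q : R) : 1/2 <= q < 1 - b -> r q <= r (1 - b).
Proof.
  intros hq.
  rewrite rB_at_1_sub_b; unfold r; rewrite rB_herd_B by lra.
  rewrite Rabs_minus_sym, Rabs_right by lra.
  assert (beta (p - (1 - b)) <= beta (p - q)) by (apply hinc; lra).
  assert (zfun b (1 - b) <= 1) by (apply zfun_le_1; lra).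
  nra.
Qed.

Lemma rB_le_at_p_above (q : R) : p <= q <= 1 -> r q <= r p.
Proof.
  intros hq.
  rewrite rB_at_p; unfold r; rewrite rB_signal by lra.
  assert (0 <= beta (Rabs (q - p))) by (apply hnn; rewrite Rabs_right; lra).
  assert (zfun b p <= zfun b q) by (apply zfun_le_compat; lra).
  nra.
Qed.

Lemma rB_convex_between (t : R) : 0 <= t <= 1 ->
  r (t * (1 - b) + (1 - t) * p) <= t * r (1 - b) + (1 - t) * r p.
Proof.
  intros ht.
  set (d := p - (1 - b)).
  assert (hdist : Rabs (t * (1 - b) + (1 - t) * p - p) = t * d).
  { rewrite Rabs_minus_sym, Rabs_right; unfold d; nra. }
  rewrite rB_at_p, rB_at_1_sub_b; fold d.
  unfold r; rewrite rB_signal by nra.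
  rewrite hdist, zfun_convex_comb.
  assert (t * beta d <= beta (t * d)) by (apply concave_scale; auto; unfold d; lra).
  nra.
Qed.

Lemma rB_le_Rmax_candidates (q : R) :
  1/2 <= q <= 1 -> r q <= Rmax (r p) (r (1 - b)).
Proof.
  intros hq.
  destruct (Rlt_dec q (1 - b)) as [hlow | hlow].
  - eapply Rle_trans; [apply rB_le_at_1_sub_b_herding; lra | apply Rmax_r].
  - destruct (Rle_dec p q) as [hhigh | hhigh].
    + eapply Rle_trans; [apply rB_le_at_p_above; lra | apply Rmax_l].
    + destruct (segment_convex_comb (1 - b) p q ltac:(lra)) as [t [ht ->]].
      eapply Rle_trans; [apply rB_convex_between; exact ht |].
      rewrite Rmax_comm; apply convex_comb_le_Rmax; exact ht.
Qed.

End BiasedPlannerReward.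

Lemma myopic_opt_of_le_Rmax (beta : R -> R) (p C b x y : R) :
  1/2 <= x <= 1 -> 1/2 <= y <= 1 ->
  (forall q, 1/2 <= q <= 1 ->
     rB beta p C b q <= Rmax (rB beta p C b x) (rB beta p C b y)) ->
  myopic_opt beta p C b x \/ myopic_opt beta p C b y.
Proof.
  intros hx hy hbound.
  destruct (Rle_dec (rB beta p C b y) (rB beta p C b x)) as [hyx | hyx].
  - left; split; [exact hx |].
    intros q hq; rewrite <- (Rmax_left _ _ hyx); exact (hbound q hq).
  - right; split; [exact hy |].
    intros q hq; rewrite <- (Rmax_right (rB beta p C b x)) by lra.
    exact (hbound q hq).
Qed.

Theorem lemma13 (p C : R) (beta : R -> R)
  (hp : 1/2 <= p < 1) (hbeta : cost_ok beta) (hC : 0 < C) :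
  forall b : R, 1 - p <= b <= 1/2 ->
    exists q : R, (q = p \/ q = 1 - b) /\ myopic_opt beta p C b q.
Proof.
  intros b hb.
  destruct hbeta as [hnn [hinc [_ [hconc h0]]]].
  destruct (myopic_opt_of_le_Rmax beta p C b p (1 - b)) as [hopt | hopt].
  - lra.
  - lra.
  - intros q hq; apply rB_le_Rmax_candidates; auto; lra.
  - exists p; auto.
  - exists (1 - b); auto.
Qed.
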